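(* Let $\bm\mu=(\mu_1,\dots,\mu_r)$ be finite positive Borel measures on the unit circle with infinite supports and $\bm n,\bm m\in\mathbb N^r$. Then $(\bm n,\bm m)$ is normal if and only if $(\bm m,\bm n)$ is normal, and in that case $\Phi_{\bm n,\bm m}^\sharp=\Phi^*_{\bm m,\bm n}$, where $\Phi^\sharp(z)=\overline{\Phi(1/\bar z)}$.
   Context: $|\bm n|=\sum_j n_j$. The pair $(\bm n,\bm m)$ is normal if there is a unique Laurent polynomial $\Phi_{\bm n,\bm m}\in\operatorname{span}\{z^p:-|\bm m|\le p\le|\bm n|\}$ with coefficient of $z^{|\bm n|}$ equal to $1$ such that $\int\Phi_{\bm n,\bm m}(w)w^{-p}\,d\mu_j(w)=0$ for $p=-m_j,\dots,n_j-1$, $j=1,\dots,r$. When $(\bm n,\bm m)$ is normal, $\Phi^*_{\bm n,\bm m}$ denotes the unique Laurent polynomial in $\operatorname{span}\{z^p:-|\bm m|\le p\le|\bm n|\}$ with coefficient of $z^{-|\bm m|}$ equal to $1$ such that $\int\Phi^*_{\bm n,\bm m}(w)w^{-p}\,d\mu_j(w)=0$ for $p=-m_j+1,\dots,n_j$, $j=1,\dots,r$ (its existence and uniqueness is equivalent to normality of $(\bm n,\bm m)$). *)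

From HB Require Import structures.
From mathcomp Require Import all_boot all_order all_algebra.
From mathcomp Require Import all_classical all_reals all_analysis.
From mathcomp Require Import complex.
Set Implicit Arguments. Unset Strict Implicit. Unset Printing Implicit Defensive.
Import Order.TTheory GRing.Theory Num.Theory.
Import numFieldNormedType.Exports.
Local Open Scope classical_set_scope.
Local Open Scope ring_scope.

Section Defs.
Variable R : realType.
Local Notation C := (complex R).

Definition unit_circle : set (R * R)%type := [set w | w.1 ^+ 2 + w.2 ^+ 2 = 1].

Definition toC (w : R * R) : C := (w.1 +i* w.2)%C.

(* Borel measures on the plane; "a measure on the unit circle" is a measure
   on the plane concentrated on the unit circle. *)
Definition on_unit_circle (mu : {finite_measure set (R * R)%type -> \bar R}) :=
  mu (~` unit_circle) = 0%E.

Definition msupport (mu : {finite_measure set (R * R)%type -> \bar R}) : set (R * R)%type :=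
  [set x | forall U : set (R * R)%type, open U -> U x -> (0 < mu U)%E].

Definition cint_eq0 (mu : {finite_measure set (R * R)%type -> \bar R}) (f : R * R -> C) :=
  (\int[mu]_(w in unit_circle) (complex.Re (f w))%:E = 0)%E /\
  (\int[mu]_(w in unit_circle) (complex.Im (f w))%:E = 0)%E.

(* Laurent polynomials are represented by their coefficient function
   c : int -> C; c p is the coefficient of z^p.
   in_span a b c : c lies in span{z^p : -a <= p <= b}. *)
Definition in_span (a b : nat) (c : int -> C) :=
  forall p : int, (p < - (a%:Z) \/ b%:Z < p) -> c p = 0.

Definition leval (a b : nat) (c : int -> C) (z : C) : C :=
  \sum_(k < (a + b).+1) c (k%:Z - a%:Z) * z ^ (k%:Z - a%:Z).

(* Phi^sharp(z) = conj(Phi(1/conj z)): coefficient of z^p is conj(c(-p)). *)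
Definition lsharp (c : int -> C) : int -> C := fun p => (c (- p))^*%C.

Definition msize (r : nat) (n : 'I_r -> nat) : nat := (\sum_(j < r) n j)%N.

Definition is_Phi (r : nat) (mu : 'I_r -> {finite_measure set (R * R)%type -> \bar R})
    (n m : 'I_r -> nat) (c : int -> C) :=
  [/\ in_span (msize m) (msize n) c,
      c (msize n)%:Z = 1 &
      forall (j : 'I_r) (p : int), - (m j)%:Z <= p <= (n j)%:Z - 1 ->
        cint_eq0 (mu j) (fun w => leval (msize m) (msize n) c (toC w) * toC w ^ (- p))].

Definition normal (r : nat) (mu : 'I_r -> {finite_measure set (R * R)%type -> \bar R})
    (n m : 'I_r -> nat) :=
  exists! c : int -> C, is_Phi mu n m c.

Definition is_Phistar (r : nat) (mu : 'I_r -> {finite_measure set (R * R)%type -> \bar R})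
    (n m : 'I_r -> nat) (c : int -> C) :=
  [/\ in_span (msize m) (msize n) c,
      c (- (msize m)%:Z) = 1 &
      forall (j : 'I_r) (p : int), - (m j)%:Z + 1 <= p <= (n j)%:Z ->
        cint_eq0 (mu j) (fun w => leval (msize m) (msize n) c (toC w) * toC w ^ (- p))].

End Defs.

(* Write G_j(e) = \int z^e dmu_j for the moments of mu_j. Every orthogonality
   condition on a Laurent polynomial Phi = sum_k c_k z^k becomes the linear
   equation sum_k c_k G_j(k - p) = 0, and G_j(-e) = conj G_j(e) because |z| = 1
   on the circle. Under c_k |-> conj c_(-k), i.e. Phi |-> Phi^#, the conditions
   defining Phi_(n,m) thus turn into those defining Phi^*_(m,n).
   The |n| + |m| conditions on the |n| + |m| + 1 coefficients of Phi_(n,m)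
   always have a nonzero solution, so (n, m) is normal iff no nonzero solution
   has a vanishing coefficient of z^|n|. If e is such a solution for (m, n),
   then (z e)^# is one for (n, m); hence normality is symmetric. *)

From HB Require Import structures.
From mathcomp Require Import all_boot all_order all_algebra.
From mathcomp Require Import all_classical all_reals all_analysis.
From mathcomp Require Import complex.
From mathcomp Require Import lra zify measurable_realfun.
Set Implicit Arguments. Unset Strict Implicit. Unset Printing Implicit Defensive.
Import Order.TTheory GRing.Theory Num.Theory.
Import numFieldNormedType.Exports.
Local Open Scope classical_set_scope.
Local Open Scope ring_scope.

Section LaurentPairing.
Variable R : realType.
Local Notation C := (complex R).
Implicit Types (a b : nat) (c F : int -> C).

Definition pairing a b c F : C :=
  \sum_(k < (a + b).+1) c (k%:Z - a%:Z) * F (k%:Z - a%:Z).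

Lemma eq_pairing a b c F F' : F =1 F' -> pairing a b c F = pairing a b c F'.
Proof. by move=> eqF; apply: eq_bigr => k _; rewrite eqF. Qed.

Lemma pairingD a b c1 c2 F :
  pairing a b (fun k => c1 k + c2 k) F = pairing a b c1 F + pairing a b c2 F.
Proof. by rewrite /pairing -big_split; apply: eq_bigr => k _; rewrite mulrDl. Qed.

Lemma pairingZ a b x c F : pairing a b (fun k => x * c k) F = x * pairing a b c F.
Proof. by rewrite /pairing mulr_sumr; apply: eq_bigr => k _; rewrite mulrA. Qed.

Lemma pairing_sharp a b c F :
  pairing b a (lsharp c) F = (pairing a b c (fun e => (F (- e))^*%C))^*%C.
Proof.
rewrite /pairing rmorph_sum /= addnC (reindex_inj rev_ord_inj) /=.
apply: eq_bigr => i _; rewrite /lsharp rmorphM /= conjcK.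
have i_lt := ltn_ord i.
have -> : (a + b - i)%N%:Z - b%:Z = - (i%:Z - a%:Z) by lia.
by rewrite opprK.
Qed.

Lemma pairing_shift a b c F : c (- a%:Z - 1) = 0 -> c b%:Z = 0 ->
  pairing a b (fun k => c (k - 1)) F = pairing a b c (fun e => F (e + 1)).
Proof.
move=> bot_c top_c; rewrite /pairing big_ord_recl big_ord_recr /= sub0r bot_c.
have -> : (a + b)%N%:Z - a%:Z = b%:Z by lia.
rewrite top_c !mul0r add0r addr0; apply: eq_bigr => i _.
have -> : (bump 0 i)%:Z - a%:Z = i%:Z - a%:Z + 1 by rewrite /bump; lia.
by rewrite addrK.
Qed.

Lemma lsharpK : involutive (@lsharp R).
Proof. by move=> c; apply/funext => p; rewrite /lsharp opprK conjcK. Qed.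

Lemma in_span_sharp a b c : in_span a b c -> in_span b a (lsharp c).
Proof. by move=> span_c p p_out; rewrite /lsharp span_c ?conjc0 //; lia. Qed.

Lemma in_spanD a b c1 c2 : in_span a b c1 -> in_span a b c2 ->
  in_span a b (fun k => c1 k + c2 k).
Proof. by move=> span_c1 span_c2 p p_out; rewrite span_c1 ?span_c2 ?addr0. Qed.

Lemma in_spanZ a b x c : in_span a b c -> in_span a b (fun k => x * c k).
Proof. by move=> span_c p p_out; rewrite span_c ?mulr0. Qed.

Lemma in_span_shift a b c : c b%:Z = 0 -> in_span a b c ->
  in_span a b (fun k => c (k - 1)).
Proof.
move=> top_c span_c p p_out; have [-> //|p_ne] := eqVneq (p - 1) b%:Z.
by apply: span_c; lia.
Qed.

Lemma exists_pairing_kernel a b (E : finType) (F : E -> int -> C) :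
  (#|E| <= a + b)%N ->
  exists2 v, in_span a b v /\ ~ (forall p, v p = 0) &
    forall x, pairing a b v (F x) = 0.
Proof.
move=> card_E.
pose A := \matrix_(i < (a + b).+1, l < #|E|) F (enum_val l) (i%:Z - a%:Z).
have /rowV0Pn[u /sub_kermxP uA u_neq0] : kermx A != 0.
  by rewrite -mxrank_eq0 mxrank_ker subn_eq0 -ltnNge ltnS (leq_trans (rank_leq_col A)).
(* [v] reads [u] as the coefficients of z^-a, ..., z^b. *)
pose v p := if p + a%:Z is Posz t then
  (if (t < (a + b).+1)%N then u 0 (inord t) else 0) else 0.
have vE (i : 'I_(a + b).+1) : v (i%:Z - a%:Z) = u 0 i.
  by rewrite /v subrK ltn_ord inord_val.
exists v; first split.
- move=> p p_out; rewrite /v; case pa: (p + a%:Z) => [t|//].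
  by case: ifP => // t_lt; lia.
- move=> v0; apply: (negP u_neq0); apply/eqP/rowP => i.
  by rewrite mxE -vE v0.
- move=> x; have := congr1 (fun M : 'M[C]_(1, #|{: E}|) => M 0 (enum_rank x)) uA.
  rewrite !mxE => <-; apply: eq_bigr => i _.
  by rewrite vE !mxE enum_rankK.
Qed.

End LaurentPairing.

Section MomentSystems.
Variable R : realType.
Local Notation C := (complex R).
Variables (r : nat) (G : 'I_r -> int -> C).
Hypothesis G_conj : forall j e, G j (- e) = (G j e)^*%C.
Implicit Types (a b : nat) (c : int -> C) (n m : 'I_r -> nat) (lo hi : 'I_r -> int).

Definition orth lo hi a b c :=
  forall j p, lo j <= p <= hi j -> pairing a b c (fun e => G j (e - p)) = 0.

Lemma sub_orth lo hi lo' hi' a b c :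
  (forall j, lo j <= lo' j /\ hi' j <= hi j) ->
  orth lo hi a b c -> orth lo' hi' a b c.
Proof.
move=> sub_itv orth_c j p /andP[lo_p hi_p]; apply: orth_c.
by have [lo_lo' hi'_hi] := sub_itv j; lia.
Qed.

Lemma orthD lo hi a b c1 c2 : orth lo hi a b c1 -> orth lo hi a b c2 ->
  orth lo hi a b (fun k => c1 k + c2 k).
Proof. by move=> orth1 orth2 j p p_in; rewrite pairingD orth1 ?orth2 ?addr0. Qed.

Lemma orthZ lo hi a b x c : orth lo hi a b c -> orth lo hi a b (fun k => x * c k).
Proof. by move=> orth_c j p p_in; rewrite pairingZ orth_c ?mulr0. Qed.

Lemma orth_shift lo hi a b c : c (- a%:Z - 1) = 0 -> c b%:Z = 0 ->
  orth lo hi a b c ->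
  orth (fun j => lo j + 1) (fun j => hi j + 1) a b (fun k => c (k - 1)).
Proof.
move=> bot_c top_c orth_c j p /andP[lo_p hi_p]; rewrite pairing_shift //.
rewrite (@eq_pairing _ _ _ _ _ (fun e => G j (e - (p - 1)))); last first.
  by move=> e; rewrite opprB addrA addrAC.
by apply: orth_c; lia.
Qed.

Lemma orth_sharp lo hi a b c : orth lo hi a b c ->
  orth (fun j => - hi j) (fun j => - lo j) b a (lsharp c).
Proof.
move=> orth_c j p /andP[lo_p hi_p]; rewrite pairing_sharp.
rewrite (@eq_pairing _ _ _ _ _ (fun e => G j (e - - p))); last first.
  by move=> e; rewrite -opprD G_conj conjcK opprK.
by rewrite orth_c ?conjc0 //; lia.
Qed.

Definition Phi_orth n m :=
  orth (fun j => - (m j)%:Z) (fun j => (n j)%:Z - 1) (msize m) (msize n).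

Definition moment_Phi n m c :=
  [/\ in_span (msize m) (msize n) c, c (msize n)%:Z = 1 & Phi_orth n m c].

Definition moment_Phistar n m c :=
  [/\ in_span (msize m) (msize n) c, c (- (msize m)%:Z) = 1 &
      orth (fun j => - (m j)%:Z + 1) (fun j => (n j)%:Z) (msize m) (msize n) c].

Definition Phi_kernel_trivial n m := forall e,
  in_span (msize m) (msize n) e -> e (msize n)%:Z = 0 -> Phi_orth n m e ->
  forall p, e p = 0.

Lemma exists_Phi_orth n m :
  exists2 v, in_span (msize m) (msize n) v /\ ~ (forall p, v p = 0) &
    Phi_orth n m v.
Proof.
pose E := {j : 'I_r & 'I_(m j + n j)}.
pose F (x : E) e := G (tag x) (e - ((tagged x)%:Z - (m (tag x))%:Z)).
have card_E : #|{: E}| = (msize m + msize n)%N.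
  rewrite card_tagged sumnE big_map big_enum /= /msize -big_split /=.
  by apply: eq_bigr => j _; rewrite card_ord.
have [v span_v orth_v] := exists_pairing_kernel F (eq_leq card_E).
exists v => // j p /andP[lo_p hi_p].
have t_lt : (absz (p + (m j)%:Z)%R < m j + n j)%N by lia.
have := orth_v (Tagged (fun j => 'I_(m j + n j)) (Ordinal t_lt)).
by rewrite /F /=; have -> : (absz (p + (m j)%:Z))%:Z - (m j)%:Z = p by lia.
Qed.

Lemma moment_normalP n m :
  (exists! c, moment_Phi n m c) <-> Phi_kernel_trivial n m.
Proof.
split.
  move=> [c [[span_c top_c orth_c] c_uniq]] e span_e top_e orth_e p.
  have Phi_ce : moment_Phi n m (fun k => c k + e k).
    by split; [exact: in_spanD | rewrite top_c top_e addr0 | exact: orthD].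
  move: (c_uniq _ Phi_ce) => /(congr1 (fun f => f p)) /esym /eqP.
  by rewrite -subr_eq0 addrAC subrr add0r => /eqP.
move=> ker_triv; have [v [span_v v_neq0] orth_v] := exists_Phi_orth n m.
have top_v : v (msize n)%:Z != 0.
  by apply/eqP => top_v0; apply: v_neq0; exact: ker_triv.
pose c k := (v (msize n)%:Z)^-1 * v k.
have Phi_c : moment_Phi n m c.
  by split; [exact: in_spanZ | exact: mulVf | exact: orthZ].
exists c; split => // c' [span_c' top_c' orth_c'].
apply/funext => p; apply/eqP; rewrite -subr_eq0 -mulN1r; apply/eqP.
apply: (ker_triv (fun k => c k + -1 * c' k)) => //.
- by apply: in_spanD => //; exact: in_spanZ.
- by rewrite /c mulVf // top_c' mulN1r subrr.
- by apply: orthD => //; exact: orthZ.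
Qed.

Lemma Phi_kernel_trivial_sym n m : Phi_kernel_trivial n m -> Phi_kernel_trivial m n.
Proof.
move=> ker_nm e span_e top_e orth_e p.
have bot_e : e (- (msize n)%:Z - 1) = 0 by apply: span_e; lia.
pose e1 k := e (k - 1).
have sharp_e1_eq0 : forall k, lsharp e1 k = 0.
  apply: ker_nm; first exact/in_span_sharp/in_span_shift.
    by rewrite /lsharp /e1 bot_e conjc0.
  by apply: sub_orth (orth_sharp (orth_shift bot_e top_e orth_e)) => j; lia.
have /eqP := sharp_e1_eq0 (- (p + 1)).
by rewrite /lsharp /e1 opprK addrK conjc_eq0 => /eqP.
Qed.

Lemma moment_Phi_sharp n m c : moment_Phi n m c -> moment_Phistar m n (lsharp c).
Proof.
case=> span_c top_c orth_c; split; first exact: in_span_sharp.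
  by rewrite /lsharp opprK top_c conjc1.
by apply: sub_orth (orth_sharp orth_c) => j; lia.
Qed.

Lemma moment_Phistar_sharp n m c : moment_Phistar m n c -> moment_Phi n m (lsharp c).
Proof.
case=> span_c top_c orth_c; split; first exact: in_span_sharp.
  by rewrite /lsharp top_c conjc1.
by apply: sub_orth (orth_sharp orth_c) => j; lia.
Qed.

End MomentSystems.

Section UnitCircle.
Variable R : realType.
Local Notation C := (complex R).
Local Notation Re := complex.Re.
Local Notation Im := complex.Im.
Local Notation D := (@unit_circle R).

Lemma ReD (x y : C) : Re (x + y) = Re x + Re y. Proof. by case: x; case: y. Qed.
Lemma ImD (x y : C) : Im (x + y) = Im x + Im y. Proof. by case: x; case: y. Qed.
Lemma ReJ (x : C) : Re x^*%C = Re x. Proof. by case: x. Qed.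
Lemma ImJ (x : C) : Im x^*%C = - Im x. Proof. by case: x. Qed.

Lemma Re_mul (x y : C) : Re (x * y) = Re x * Re y - Im x * Im y.
Proof. by case: x; case: y. Qed.

Lemma Im_mul (x y : C) : Im (x * y) = Re x * Im y + Im x * Re y.
Proof. by case: x => a b; case: y. Qed.

Lemma measurable_unit_circle : measurable D.
Proof.
have := @measurable_funD _ _ _ setT (fun w : R * R => w.1 ^+ 2) (fun w => w.2 ^+ 2).
move=> /(_ (measurable_funX _ measurable_fst) (measurable_funX _ measurable_snd)).
by move=> /(_ measurableT [set 1] (measurable_set1 1)); rewrite setTI.
Qed.

Lemma toC_unit w : D w -> toC w * (toC w)^*%C = 1.
Proof.
case: w => x y /= Dxy; apply/eqP; rewrite eq_complex /=.
by apply/andP; split; apply/eqP; rewrite /unit_circle /= in Dxy; lra.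
Qed.

Lemma toC_neq0 w : D w -> toC w != 0.
Proof.
move=> /toC_unit uw; apply/eqP => w0.
by move: uw; rewrite w0 mul0r => /eqP; rewrite eq_sym oner_eq0.
Qed.

Lemma toC_expz_unit k w : D w -> toC w ^ k * (toC w ^ k)^*%C = 1.
Proof. by move=> Dw; rewrite (fmorphXz conjc) -expfzMl toC_unit // exp1rz. Qed.

Lemma toC_expzN w k : D w -> toC w ^ (- k) = (toC w ^ k)^*%C.
Proof.
move=> Dw; rewrite -invr_expz -[LHS]mulr1 -(toC_expz_unit k Dw).
by rewrite mulKf // expfz_neq0 // toC_neq0.
Qed.

Lemma unit_Re_Im_le1 (z : C) : z * z^*%C = 1 -> `|Re z| <= 1 /\ `|Im z| <= 1.
Proof.
case: z => x y /eqP; rewrite eq_complex /= => /andP[/eqP xy _].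
by split; rewrite ler_norml; apply/andP; split; nra.
Qed.

Lemma measurable_Re_Im_expn n :
  measurable_fun setT (fun w : R * R => Re (toC w ^+ n)) /\
  measurable_fun setT (fun w : R * R => Im (toC w ^+ n)).
Proof.
elim: n => [|n [mRe mIm]].
  by split; under eq_fun do rewrite expr0; exact: measurable_cst.
have [m1 m2] := (@measurable_fst _ _ R R, @measurable_snd _ _ R R).
split.
  under eq_fun do rewrite exprS Re_mul.
  by apply: measurable_funB; apply: measurable_funM.
under eq_fun do rewrite exprS Im_mul.
by apply: measurable_funD; apply: measurable_funM.
Qed.

Lemma measurable_Re_Im_expz k :
  measurable_fun D (fun w => Re (toC w ^ k)) /\
  measurable_fun D (fun w => Im (toC w ^ k)).
Proof.
case: k => n.
  have [mRe mIm] := measurable_Re_Im_expn n.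
  by split; [exact: measurable_funS mRe | exact: measurable_funS mIm].
have [mRe mIm] := measurable_Re_Im_expn n.+1.
split.
  apply: (eq_measurable_fun (fun w => Re (toC w ^+ n.+1))).
    by move=> w /set_mem Dw; rewrite NegzE toC_expzN // ReJ.
  exact: measurable_funS mRe.
apply: (eq_measurable_fun (fun w => - Im (toC w ^+ n.+1))).
  by move=> w /set_mem Dw; rewrite NegzE toC_expzN // ImJ.
by apply: measurableT_comp => //; exact: measurable_funS mIm.
Qed.

End UnitCircle.

Section IntegrableEFin.
Context d (T : measurableType d) (R : realType).
Variables (mu : {measure set T -> \bar R}) (D : set T).
Hypothesis mD : measurable D.
Implicit Types g h : T -> R.

Lemma integrable_EFinD g h : mu.-integrable D (EFin \o g) ->
  mu.-integrable D (EFin \o h) -> mu.-integrable D (EFin \o (g \+ h)).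
Proof.
move=> ig ih; apply: (eq_integrable mD _ _ _ (integrableD mD ig ih)) => w _ /=.
by rewrite EFinD.
Qed.

Lemma integrable_EFinB g h : mu.-integrable D (EFin \o g) ->
  mu.-integrable D (EFin \o h) -> mu.-integrable D (EFin \o (g \- h)).
Proof.
move=> ig ih; apply: (eq_integrable mD _ _ _ (integrableB mD ig ih)) => w _ /=.
by rewrite EFinB.
Qed.

Lemma integrable_EFinZ (k : R) g : mu.-integrable D (EFin \o g) ->
  mu.-integrable D (EFin \o (fun w => k * g w)).
Proof.
move=> ig; apply: (eq_integrable mD _ _ _ (integrableZl mD k ig)) => w _ /=.
by rewrite EFinM.
Qed.

End IntegrableEFin.

Section ComplexIntegral.
Variable R : realType.
Local Notation C := (complex R).
Local Notation Re := complex.Re.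
Local Notation Im := complex.Im.
Local Notation D := (@unit_circle R).
Variable mu : {finite_measure set (R * R)%type -> \bar R}.
Implicit Types f g : R * R -> C.

Local Notation mD := (@measurable_unit_circle R).

Definition cintegrable f :=
  mu.-integrable D (EFin \o (fun w => Re (f w))) /\
  mu.-integrable D (EFin \o (fun w => Im (f w))).

Definition cintegral f : C :=
  (Rintegral mu D (fun w => Re (f w)) +i* Rintegral mu D (fun w => Im (f w)))%C.

Definition moment (e : int) : C := cintegral (fun w => toC w ^ e).

Lemma eq_cintegrable f g : {in D, f =1 g} -> cintegrable f -> cintegrable g.
Proof.
move=> fg [intRe intIm]; split.
  by apply: (eq_integrable mD _ _ _ intRe) => w Dw /=; rewrite fg.
by apply: (eq_integrable mD _ _ _ intIm) => w Dw /=; rewrite fg.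
Qed.

Lemma cintegrableD f g : cintegrable f -> cintegrable g ->
  cintegrable (fun w => f w + g w).
Proof.
move=> [fRe fIm] [gRe gIm]; split.
  apply: (eq_integrable mD _ _ _ (integrable_EFinD mD fRe gRe)).
  by move=> w _ /=; rewrite ReD.
apply: (eq_integrable mD _ _ _ (integrable_EFinD mD fIm gIm)).
by move=> w _ /=; rewrite ImD.
Qed.

Lemma cintegrableZ (x : C) f : cintegrable f -> cintegrable (fun w => x * f w).
Proof.
move=> [fRe fIm]; split.
  apply: (eq_integrable mD _ _ _ (integrable_EFinB mD
    (integrable_EFinZ mD (Re x) fRe) (integrable_EFinZ mD (Im x) fIm))).
  by move=> w _ /=; rewrite Re_mul.
apply: (eq_integrable mD _ _ _ (integrable_EFinD mD
  (integrable_EFinZ mD (Re x) fIm) (integrable_EFinZ mD (Im x) fRe))).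
by move=> w _ /=; rewrite Im_mul.
Qed.

Lemma cintegrable_sum (I : Type) (s : seq I) (F : I -> R * R -> C) :
  (forall i, cintegrable (F i)) -> cintegrable (fun w => \sum_(i <- s) F i w).
Proof.
move=> intF; elim: s => [|i s IHs].
  by split; apply: (eq_integrable mD _ _ _ (finite_measure_integrable_cst mu 0 mD))
    => w _ /=; rewrite big_nil.
by apply: eq_cintegrable (cintegrableD (intF i) IHs) => w _; rewrite big_cons.
Qed.

Lemma cintegrable_expz k : cintegrable (fun w => toC w ^ k).
Proof.
have [mRe mIm] := measurable_Re_Im_expz R k.
split; apply: (le_integrable mD _ _ (finite_measure_integrable_cst mu 1 mD));
  try exact/measurable_EFinP;
  by move=> w Dw; rewrite lee_fin normr1; case: (unit_Re_Im_le1 (toC_expz_unit k Dw)).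
Qed.

Lemma cint_eq0P f : cintegrable f -> cint_eq0 mu f <-> cintegral f = 0.
Proof.
move=> [fRe fIm]; rewrite /cint_eq0 /cintegral /Rintegral.
have fin_Re := integrable_fin_num mD fRe; have fin_Im := integrable_fin_num mD fIm.
split; first by move=> [-> ->].
move=> /eqP; rewrite eq_complex /= => /andP[/eqP int_Re /eqP int_Im].
by split; [rewrite -(fineK fin_Re) int_Re | rewrite -(fineK fin_Im) int_Im].
Qed.

Lemma eq_cintegral f g : {in D, f =1 g} -> cintegral f = cintegral g.
Proof.
move=> fg; rewrite /cintegral.
by congr (_ +i* _)%C; apply: eq_Rintegral => w Dw; rewrite fg.
Qed.

Lemma cintegralD f g : cintegrable f -> cintegrable g ->
  cintegral (fun w => f w + g w) = cintegral f + cintegral g.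
Proof.
move=> [fRe fIm] [gRe gIm]; rewrite /cintegral.
rewrite (eq_Rintegral mu (g := fun w => Re (f w) + Re (g w)));
  last by move=> w _; rewrite ReD.
rewrite (eq_Rintegral mu (f := fun w => Im (f w + g w))
  (g := fun w => Im (f w) + Im (g w))); last by move=> w _; rewrite ImD.
by rewrite !RintegralD //; exact: mD.
Qed.

Lemma cintegralZ (x : C) f : cintegrable f ->
  cintegral (fun w => x * f w) = x * cintegral f.
Proof.
move=> [fRe fIm]; rewrite /cintegral.
rewrite (eq_Rintegral mu (g := fun w => Re x * Re (f w) - Im x * Im (f w)));
  last by move=> w _; rewrite Re_mul.
rewrite (eq_Rintegral mu (f := fun w => Im (x * f w))
  (g := fun w => Re x * Im (f w) + Im x * Re (f w)));
  last by move=> w _; rewrite Im_mul.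
rewrite RintegralB ?RintegralD ?RintegralZl //;
  try exact: mD; try by apply: (integrable_EFinZ mD).
by case: x => a b; apply/eqP; rewrite eq_complex /= !eqxx.
Qed.

Lemma cintegral_sum (I : Type) (s : seq I) (F : I -> R * R -> C) :
  (forall i, cintegrable (F i)) ->
  cintegral (fun w => \sum_(i <- s) F i w) = \sum_(i <- s) cintegral (F i).
Proof.
move=> intF; elim: s => [|i s IHs].
  rewrite big_nil (eq_cintegral (g := fun w => 0 * toC w ^ 0)); last first.
    by move=> w _; rewrite big_nil mul0r.
  by rewrite cintegralZ ?mul0r //; exact: cintegrable_expz.
rewrite big_cons -IHs -cintegralD //; last exact: cintegrable_sum.
by apply: eq_cintegral => w _; rewrite big_cons.
Qed.

Lemma cintegral_conj f : cintegrable f ->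
  cintegral (fun w => (f w)^*%C) = (cintegral f)^*%C.
Proof.
move=> [_ fIm]; rewrite /cintegral /=.
rewrite (eq_Rintegral mu (g := fun w => Re (f w))); last by move=> w _; rewrite ReJ.
rewrite (eq_Rintegral mu (f := fun w => Im (f w)^*%C)
  (g := fun w => -1 * Im (f w))); last by move=> w _; rewrite ImJ mulN1r.
by rewrite RintegralZl ?mulN1r //; exact: mD.
Qed.

Lemma moment_conj e : moment (- e) = (moment e)^*%C.
Proof.
rewrite /moment -cintegral_conj; last exact: cintegrable_expz.
by apply: eq_cintegral => w /set_mem Dw; rewrite toC_expzN.
Qed.

Lemma cint_eq0_pairing a b c p :
  cint_eq0 mu (fun w => leval a b c (toC w) * toC w ^ (- p)) <->
  pairing a b c (fun e => moment (e - p)) = 0.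
Proof.
set f := fun w => _.
pose g w := \sum_(k < (a + b).+1) c (k%:Z - a%:Z) * toC w ^ (k%:Z - a%:Z - p).
have int_terms (k : 'I_(a + b).+1) :
    cintegrable (fun w => c (k%:Z - a%:Z) * toC w ^ (k%:Z - a%:Z - p)).
  exact/cintegrableZ/cintegrable_expz.
have gf : {in D, g =1 f}.
  move=> w /set_mem Dw; rewrite /f /g /leval mulr_suml; apply: eq_bigr => k _.
  by rewrite -mulrA -expfzDr // toC_neq0.
have int_f : cintegrable f by apply: eq_cintegrable gf _; exact: cintegrable_sum.
suff -> : pairing a b c (fun e => moment (e - p)) = cintegral f by exact: cint_eq0P.
rewrite -(eq_cintegral gf) cintegral_sum //; apply: eq_bigr => k _.
by rewrite cintegralZ //; exact: cintegrable_expz.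
Qed.

End ComplexIntegral.

Section MomentFamily.
Variables (R : realType) (r : nat).
Variable mu : 'I_r -> {finite_measure set (R * R)%type -> \bar R}.

Definition moments j := moment (mu j).

Lemma moments_conj j e : moments j (- e) = (moments j e)^*%C.
Proof. exact: moment_conj. Qed.

Lemma is_PhiE n m : is_Phi mu n m = moment_Phi moments n m.
Proof.
apply/funext => c; apply/propext.
by split=> -[span_c top_c orth_c]; split=> // j p /orth_c /cint_eq0_pairing.
Qed.

Lemma is_PhistarE n m : is_Phistar mu n m = moment_Phistar moments n m.
Proof.
apply/funext => c; apply/propext.
by split=> -[span_c top_c orth_c]; split=> // j p /orth_c /cint_eq0_pairing.
Qed.

End MomentFamily.

Theorem proposition2p9 (R : realType) (r : nat)
    (mu : 'I_r -> {finite_measure set (R * R)%type -> \bar R})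
    (n m : 'I_r -> nat) :
  (forall j, on_unit_circle (mu j)) ->
  (forall j, ~ finite_set (msupport (mu j))) ->
  (normal mu n m <-> normal mu m n) /\
  (normal mu n m ->
     forall c : int -> complex R, is_Phi mu n m c ->
       is_Phistar mu m n (lsharp c) /\
       (forall c' : int -> complex R, is_Phistar mu m n c' -> lsharp c = c')).
Proof.
move=> _ _; have G_conj := moments_conj mu.
rewrite /normal !is_PhiE is_PhistarE; split.
  by split=> /moment_normalP/(Phi_kernel_trivial_sym G_conj)/moment_normalP.
move=> [c0 [_ c0_uniq]] c Phi_c; split; first exact: (moment_Phi_sharp G_conj).
move=> c' /(moment_Phistar_sharp G_conj) Phi_c'.
by rewrite -(c0_uniq _ Phi_c) (c0_uniq _ Phi_c') lsharpK.
Qed.
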